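(* Let $K\subset\mathbb{R}^n$ be a closed convex set with diameter $d$ and $\sigma>0$. Then $\varepsilon^*\gtrsim\sigma\wedge d$.
   Context: $M(\eta,T)$ is the maximal cardinality of a subset of $T$ with pairwise Euclidean distances $>\eta$; the local entropy is $\log M^{\mathrm{loc}}(\varepsilon)$ with $M^{\mathrm{loc}}(\varepsilon)=\sup_{\theta\in K}M(\varepsilon/c^*,B(\theta,\varepsilon)\cap K)$, where $B$ is the closed Euclidean ball and $c^*$ is a sufficiently large absolute constant. $\varepsilon^*=\sup\{\varepsilon:\varepsilon^2/\sigma^2\le\log M^{\mathrm{loc}}(\varepsilon)\}$ (its square is up to constants the minimax risk for estimating $\mu\in K$ from $Y=\mu+\xi$, $\xi\sim N(0,\sigma^2\mathbb{I}_n)$). $\gtrsim$ hides an absolute constant. *)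

From HB Require Import structures.
From mathcomp Require Import all_boot all_order all_algebra.
From mathcomp Require Import all_classical all_reals all_analysis.
Set Implicit Arguments. Unset Strict Implicit. Unset Printing Implicit Defensive.
Import Order.TTheory GRing.Theory Num.Theory.
Import numFieldNormedType.Exports.
Local Open Scope classical_set_scope.
Local Open Scope ring_scope.

Section Defs.
Variables (R : realType) (n : nat).
Notation V := 'rV[R]_n.

Definition edist (x y : V) : R := Num.sqrt (\sum_(i < n) (x ord0 i - y ord0 i) ^+ 2).

Definition eball (th : V) (r : R) : set V := [set x | edist th x <= r].

Definition diam (K : set V) : \bar R :=
  ereal_sup [set (edist x y)%:E | x in K & y in K].

Definition is_packing (eta : R) (T : set V) (s : seq V) : Prop :=
  uniq s /\ (forall x, x \in s -> T x) /\
  (forall x y, x \in s -> y \in s -> x != y -> eta < edist x y).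

Definition packM (eta : R) (T : set V) : \bar R :=
  ereal_sup [set ((size s)%:R)%:E | s in is_packing eta T].

Definition Mloc (cstar : R) (K : set V) (eps : R) : \bar R :=
  ereal_sup [set packM (eps / cstar) (eball th eps `&` K) | th in K].

End Defs.

Definition elog {R : realType} (x : \bar R) : \bar R :=
  match x with
  | EFin r => (ln r)%:E
  | +oo%E => +oo%E
  | -oo%E => -oo%E
  end.

Definition eps_star {R : realType} {n : nat} (cstar : R) (K : set 'rV[R]_n)
  (sigma : R) : \bar R :=
  ereal_sup [set eps%:E | eps in
    [set eps : R | 0 <= eps /\ ((eps ^+ 2 / sigma ^+ 2)%:E <= elog (Mloc cstar K eps))%E]].

From Pilot Require Import Defs.
From HB Require Import structures.
From mathcomp Require Import all_boot all_order all_algebra.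
From mathcomp Require Import all_classical all_reals all_analysis.
From mathcomp Require Import ring lra.
Set Implicit Arguments. Unset Strict Implicit. Unset Printing Implicit Defensive.
Import Order.TTheory GRing.Theory Num.Theory.
Import numFieldNormedType.Exports.
Local Open Scope classical_set_scope.
Local Open Scope ring_scope.

(* Take [eps = (sigma /\ d) / 2] (if [d = 0] there is nothing to prove).  As
   [eps < d], two points of [K] are more than [eps] apart, and by convexity the
   segment joining them contains a point [z] at distance exactly [eps] from one
   endpoint [x].  For [c* > 1] the pair [{x, z}] is an [eps / c*]-packing of
   [B(x, eps) `&` K], so [log M^loc(eps) >= log 2 >= 1/4 >= eps^2 / sigma^2],
   whence [eps* >= eps]. *)

(* [all_analysis] exports an unrelated [edist] (from [urysohn]). *)
Local Notation edist := Defs.edist.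

Section Packings.
Variables (R : realType) (n : nat).
Implicit Types (x y z th : 'rV[R]_n) (K T : set 'rV[R]_n).

Lemma edistxx x : edist x x = 0.
Proof. by rewrite /edist big1 ?sqrtr0 // => i _; rewrite subrr expr0n. Qed.

Lemma edistC x y : edist x y = edist y x.
Proof.
by rewrite /edist; congr Num.sqrt; apply: eq_bigr => i _; rewrite -sqrrN opprB.
Qed.

Lemma edist_conv x y (l : R) : 0 <= l ->
  edist x (l *: y + (1 - l) *: x) = l * edist x y.
Proof.
move=> l_ge0; rewrite /edist.
have -> : \sum_(i < n) (x ord0 i - (l *: y + (1 - l) *: x) ord0 i) ^+ 2 =
          l ^+ 2 * \sum_(i < n) (x ord0 i - y ord0 i) ^+ 2.
  by rewrite mulr_sumr; apply: eq_bigr => i _; rewrite !mxE -exprMn; congr (_ ^+ 2); ring.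
by rewrite sqrtrM ?sqr_ge0 // sqrtr_sqr ger0_norm.
Qed.

Lemma is_packing1 (eta : R) T x : T x -> is_packing eta T [:: x].
Proof.
move=> Tx; split=> //; split=> [y|y z]; first by rewrite inE => /eqP ->.
by rewrite !inE => /eqP -> /eqP ->; rewrite eqxx.
Qed.

Lemma is_packing2 (eta : R) T x z : T x -> T z -> eta < edist x z ->
  x != z -> is_packing eta T [:: x; z].
Proof.
move=> Tx Tz eta_lt xz; split; first by rewrite /= inE xz.
split=> [y|a b]; first by rewrite !inE => /orP[] /eqP ->.
rewrite !inE => /orP[] /eqP -> /orP[] /eqP ->; rewrite ?eqxx // => _.
by rewrite edistC.
Qed.

Lemma Mloc_ge_size (cstar eps : R) K th s : K th ->
  is_packing (eps / cstar) (eball th eps `&` K) s ->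
  (((size s)%:R)%:E <= Mloc cstar K eps)%E.
Proof.
move=> Kth s_pack; apply: le_trans (ereal_sup_ubound _) => /=; last by exists th.
by apply: ereal_sup_ubound; exists s.
Qed.

Lemma Mloc_ge1 (cstar eps : R) K th : K th -> 0 <= eps ->
  (1%:E <= Mloc cstar K eps)%E.
Proof.
move=> Kth eps_ge0; apply: (Mloc_ge_size (th := th) (s := [:: th])) => //.
by apply: is_packing1; split=> //; rewrite /eball /= edistxx.
Qed.

Lemma Mloc_ge2 (cstar eps : R) K x z : 1 < cstar -> 0 < eps ->
  K x -> K z -> edist x z = eps -> (2%:E <= Mloc cstar K eps)%E.
Proof.
move=> cstar_gt1 eps_gt0 Kx Kz dxz.
have xz : x != z by apply: contraTneq eps_gt0; rewrite -dxz => ->; rewrite edistxx ltxx.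
apply: (Mloc_ge_size (th := x) (s := [:: x; z])) => //.
apply: is_packing2 => //; rewrite ?dxz.
- by split=> //; rewrite /eball /= edistxx ltW.
- by split=> //; rewrite /eball /= dxz.
- by rewrite ltr_pdivrMr ?(lt_trans ltr01) // ltr_pMr.
Qed.

Lemma diam_ge0 K : K !=set0 -> (0 <= diam K)%E.
Proof.
case=> th Kth; apply: ereal_sup_ubound.
by exists th => //; exists th => //; rewrite edistxx.
Qed.

Lemma lt_diamP (r : R) K :
  (r%:E < diam K)%E -> exists x y, [/\ K x, K y & r < edist x y].
Proof. by case/ereal_sup_gt=> _ [x Kx [y Ky <-]]; rewrite lte_fin; exists x, y. Qed.

End Packings.

Lemma elog_ge {R : realType} (a : R) (M : \bar R) :
  0 < a -> (a%:E <= M)%E -> ((ln a)%:E <= elog M)%E.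
Proof.
case: M => [r| |] a_gt0 /=; last 2 first.
- by move=> _; exact: leey.
- by rewrite leeNy_eq.
by rewrite !lee_fin => a_le; rewrite ler_ln // posrE (lt_le_trans a_gt0).
Qed.

Lemma ln2_ge (R : realType) : 1 / 4 <= ln (2 : R).
Proof.
have -> : (2 : R) = (1 + - (1 / 2))^-1 by field.
rewrite lnV ?posrE; last lra.
suff : ln (1 + - (1 / 2)) <= - (1 / 2 : R) by lra.
by apply: le_ln1Dx; lra.
Qed.

Section EpsStar.
Variables (R : realType) (n : nat) (cstar sigma : R) (K : set 'rV[R]_n).

Lemma eps_star_ge (eps : R) : 0 <= eps ->
  ((eps ^+ 2 / sigma ^+ 2)%:E <= elog (Mloc cstar K eps))%E ->
  (eps%:E <= eps_star cstar K sigma)%E.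
Proof. by move=> eps_ge0 h; apply: ereal_sup_ubound; exists eps. Qed.

Lemma eps_star_ge0 : K !=set0 -> (0 <= eps_star cstar K sigma)%E.
Proof.
case=> th Kth; apply: eps_star_ge => //.
apply: le_trans (elog_ge ltr01 (Mloc_ge1 cstar Kth (lexx 0))).
by rewrite ln1 expr0n /= mul0r.
Qed.

Hypotheses (cstar_gt1 : 1 < cstar) (sigma_gt0 : 0 < sigma).

Lemma eps_star_ge_lt_diam (eps : R) : convex_set K ->
  0 < eps -> eps <= sigma / 2 -> (eps%:E < diam K)%E ->
  (eps%:E <= eps_star cstar K sigma)%E.
Proof.
move=> cK eps_gt0 eps_le /lt_diamP[x [y [Kx Ky lt_xy]]].
have D_gt0 : 0 < edist x y by apply: lt_trans lt_xy.
have l_ge0 : 0 <= eps / edist x y by rewrite divr_ge0 // ltW.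
have l_le1 : eps / edist x y <= 1 by rewrite ler_pdivrMr // mul1r ltW.
set z := (eps / edist x y) *: y + (1 - eps / edist x y) *: x.
have Kz : K z := set_mem (cK y x (Itv01 l_ge0 l_le1) (mem_set Ky) (mem_set Kx)).
have dxz : edist x z = eps by rewrite edist_conv // mulfVK ?gt_eqF.
apply: eps_star_ge; first exact: ltW.
apply: le_trans (elog_ge _ (Mloc_ge2 cstar_gt1 eps_gt0 Kx Kz dxz)) => //.
rewrite lee_fin (le_trans _ (ln2_ge R)) // ler_pdivrMr ?exprn_gt0 //.
have : 0 <= eps <= sigma / 2 by rewrite eps_le ltW.
nra.
Qed.

End EpsStar.

Theorem mainTheorem14 (R : realType) :
  exists c0 : R, 0 < c0 /\ exists cbar : R, 0 < cbar /\
  forall (cstar : R), cbar <= cstar ->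
  forall (n : nat) (K : set 'rV[R]_n) (sigma : R),
    K !=set0 -> closed K -> convex_set K -> 0 < sigma ->
    (c0%:E * Order.min sigma%:E (diam K) <= eps_star cstar K sigma)%E.
Proof.
exists (1 / 2); split=> //; exists 2; split=> //.
move=> cstar cstar_ge2 n K sigma K0 _ cK sigma_gt0.
have cstar_gt1 : 1 < cstar by lra.
have m_ge0 : (0 <= Order.min sigma%:E (diam K))%E.
  by rewrite le_min lee_fin ltW ?diam_ge0.
have m_le_sigma : (Order.min sigma%:E (diam K) <= sigma%:E)%E by rewrite ge_min lexx.
have m_le_diam : (Order.min sigma%:E (diam K) <= diam K)%E by rewrite ge_min lexx orbT.
move: m_ge0 m_le_sigma m_le_diam.
case: (Order.min sigma%:E (diam K)) => [m| |] //; rewrite !lee_fin -EFinM.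
move=> m_ge0 m_le_sigma m_le_diam.
have [->|m_neq0] := eqVneq m 0; first by rewrite mulr0 eps_star_ge0.
have m_gt0 : 0 < m by rewrite lt_neqAle eq_sym m_neq0.
apply: (eps_star_ge_lt_diam cstar_gt1 sigma_gt0 cK).
- by rewrite mulr_gt0.
- lra.
- by apply: lt_le_trans m_le_diam; rewrite lte_fin; lra.
Qed.
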